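(* There is an absolute constant $c>0$ such that for every integer $n>0$ that is a power of $2$ and every integer $s$ with $0\le s<n$, if $X$ is the point set obtained from $\mathrm{BRS}(n)$ by a cyclic shift by $s$ units, then $\mathrm{WB}^{(2)}(X)\ge c\, n\log n$.
   Context: Bit reversal sequence: for an integer $i\ge0$, a set $\mathcal R$ of $2^i$ rows and a set $\mathcal C$ of $2^i$ columns, $\mathrm{BRS}(i,\mathcal R,\mathcal C)$ is defined recursively: $\mathrm{BRS}(0,\{R\},\{C\})$ is the single point $R\cap C$; and $\mathrm{BRS}(i+1,\mathcal R,\mathcal C)=\mathrm{BRS}(i,\mathcal R_{odd},\mathcal C_{left})\cup\mathrm{BRS}(i,\mathcal R_{even},\mathcal C_{right})$, where $\mathcal C_{left}$ are the leftmost $2^i$ columns of $\mathcal C$, $\mathcal C_{right}=\mathcal C\setminus\mathcal C_{left}$, and, indexing $\mathcal R=\{R_1,\dots,R_{2^{i+1}}\}$ from bottom to top, $\mathcal R_{odd}$ and $\mathcal R_{even}$ are the odd- and even-indexed rows. For $n=2^i$, $\mathrm{BRS}(n)=\mathrm{BRS}(i,\mathcal R,\mathcal C)$ with $\mathcal C$ the columns $x=1,\dots,n$ and $\mathcal R$ the rows $y=1,\dots,n$. The cyclic shift by $s$ units maps each point $(x,y)$ to $(((x-1+s)\bmod n)+1,\;y)$. Second Wilber bound: for a point set $X$ and $p\in X$, $\mathrm{funnel}(X,p)$ is the set of $q\in X$ with $q.y<p.y$ such that the smallest closed axis-parallel rectangle containing $p,q$ contains no point of $X\setminus\{p,q\}$;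 writing it as $a_1,\dots,a_r$ in increasing $y$-order, $\mathrm{alt}(X,p)$ is the number of $1\le i<r$ such that one of $a_i,a_{i+1}$ is strictly left of $p$ and the other strictly right of $p$; $\mathrm{WB}^{(2)}(X)=|X|+\sum_{p\in X}\mathrm{alt}(X,p)$. *)

From mathcomp Require Import all_boot.
Set Implicit Arguments. Unset Strict Implicit. Unset Printing Implicit Defensive.

(* A point is (x, y) : nat * nat; x = column, y = row. *)
Definition point := (nat * nat)%type.

(* Elements at odd (1-based) positions: R_1, R_3, ... *)
Fixpoint odd_pos (s : seq nat) : seq nat :=
  match s with
  | x :: _ :: t => x :: odd_pos t
  | [:: x] => [:: x]
  | [::] => [::]
  end.

(* Elements at even (1-based) positions: R_2, R_4, ... *)
Fixpoint even_pos (s : seq nat) : seq nat :=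
  match s with
  | _ :: y :: t => y :: even_pos t
  | _ => [::]
  end.

(* BRS i R C, with R the rows listed bottom to top and C the columns listed
   left to right, both of length 2^i. *)
Fixpoint BRS_rec (i : nat) (R C : seq nat) : seq point :=
  match i with
  | 0 => [:: (head 0 C, head 0 R)]
  | i'.+1 => BRS_rec i' (odd_pos R) (take (2 ^ i') C)
             ++ BRS_rec i' (even_pos R) (drop (2 ^ i') C)
  end.

Definition BRS (i : nat) : seq point := BRS_rec i (iota 1 (2 ^ i)) (iota 1 (2 ^ i)).

Definition cyc_shift (n s : nat) (X : seq point) : seq point :=
  [seq ((((p.1 - 1 + s) %% n) + 1), p.2) | p <- X].

Definition in_rect (p q r : point) : bool :=
  (minn p.1 q.1 <= r.1 <= maxn p.1 q.1) && (minn p.2 q.2 <= r.2 <= maxn p.2 q.2).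

Definition funnel (X : seq point) (p : point) : seq point :=
  sort (fun a b : point => a.2 <= b.2)
    [seq q <- X | (q.2 < p.2) &&
                  all (fun r => (r == p) || (r == q) || ~~ in_rect p q r) X].

Definition alt (X : seq point) (p : point) : nat :=
  let f := funnel X p in
  count (fun ab : point * point =>
           ((ab.1.1 < p.1) && (p.1 < ab.2.1)) || ((ab.2.1 < p.1) && (p.1 < ab.1.1)))
        (zip f (behead f)).

(* Second Wilber bound; X is a duplicate-free list representing the point set. *)
Definition WB2 (X : seq point) : nat := size X + \sum_(p <- X) alt X p.

From Stdlib Require Import Reals Lra.
From mathcomp Require Import all_boot zify.
Set Implicit Arguments. Unset Strict Implicit. Unset Printing Implicit Defensive.

(* The shifted BRS(2^i) consists of the points p_a = (col a, bitrev a + 1), a < 2^i,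
   where col shifts the column of a cyclically.  Restricting the point set to the
   columns of a dyadic block of indices that the shift does not split is closed
   under rectangles with p_a, so it only deletes points from the funnel of p_a and
   cannot create alternations; inside such a block the rows form an affine copy of
   the bit reversal of the block.  If a lies in the second quarter of its block of
   size 2^(k+2), the highest point of this block below p_a lies to the right of p_a,
   while the highest one of its left half lies to the left: enlarging the half block
   to the block adds an alternation to the funnel of p_a.  At each level at most one
   block is split by the shift, so level k yields at least 2^(i-2) - 2^k alternations,
   and summing over the levels gives WB2(X) >= i 2^i / 4. *)

Definition switches (s : seq bool) : nat :=
  count (fun ab : bool * bool => ab.1 != ab.2) (zip s (behead s)).

Lemma switches_cons2 x y s : switches [:: x, y & s] = (x != y) + switches (y :: s).
Proof. by []. Qed.

Lemma switches_cons_le y s : switches s <= switches (y :: s).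
Proof. by case: s => [|x s] //; rewrite switches_cons2 leq_addl. Qed.

Lemma switches_cons_triangle x y s : switches (x :: s) <= (x != y) + switches (y :: s).
Proof.
case: s => [|z s] //; rewrite !switches_cons2 addnA leq_add2r.
by case: x; case: y; case: z.
Qed.

Lemma switches_subseq_cons x s1 s2 :
  subseq s1 s2 -> switches (x :: s1) <= switches (x :: s2).
Proof.
elim: s2 x s1 => [|y s2 IH] x [|z s1] //=.
case: ifP => [/eqP <- | _] sub; first by rewrite !switches_cons2 leq_add2l IH.
exact: leq_trans (IH x _ sub) (switches_cons_triangle _ _ _).
Qed.

Lemma switches_subseq s1 s2 : subseq s1 s2 -> switches s1 <= switches s2.
Proof.
elim: s2 s1 => [|y s2 IH] [|z s1] //=.
case: ifP => [/eqP <- | _] sub; first exact: switches_subseq_cons.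
exact: leq_trans (IH _ sub) (switches_cons_le _ _).
Qed.

Lemma switches_rcons2 s x y :
  switches (rcons (rcons s x) y) = switches (rcons s x) + (x != y).
Proof.
elim: s => [|z s IH]; first by rewrite /switches /= addn0.
case: s IH => [|w s] /= IH; first by rewrite /switches /= !addn0.
by rewrite !switches_cons2 IH addnA.
Qed.

Definition row_le : rel point := fun a b => a.2 <= b.2.

Lemma row_le_total : total row_le.
Proof. by move=> a b; apply: leq_total. Qed.

Lemma row_le_trans : transitive row_le.
Proof. by move=> a b c; apply: leq_trans. Qed.

Lemma funnelE X p : funnel X p = sort row_le
  [seq q <- X | (q.2 < p.2) && all (fun r => (r == p) || (r == q) || ~~ in_rect p q r) X].
Proof. by []. Qed.

Lemma mem_funnel X p q : q \in funnel X p ->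
  [/\ q \in X, q.2 < p.2 & all (fun r => (r == p) || (r == q) || ~~ in_rect p q r) X].
Proof. by rewrite funnelE mem_sort mem_filter => /andP [/andP [-> ->] ->]. Qed.

Lemma sorted_funnel X p : sorted row_le (funnel X p).
Proof. exact: sort_sorted row_le_total _. Qed.

Definition rect_closed (X : seq point) (p : point) (P : pred point) :=
  {in X &, forall q r, P q -> in_rect p q r -> P r}.

Lemma funnel_filter X p (P : pred point) :
  rect_closed X p P -> funnel (filter P X) p = filter P (funnel X p).
Proof.
move=> clP; rewrite !funnelE filter_sort; [|exact: row_le_total|exact: row_le_trans].
congr sort; rewrite -!filter_predI; apply: eq_in_filter => q qX /=.
case Pq: (P q); rewrite ?andbF ?andbT //.
congr andb; rewrite all_filter; apply: eq_in_all => r rX /=.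
case Pr: (P r) => //=; symmetry; apply/orP; right; apply/negP => qr.
by move: (clP q r qX rX Pq qr); rewrite Pr.
Qed.

Definition left_of (p q : point) : bool := q.1 < p.1.

Lemma alt_switches X p : {in funnel X p, forall q, q.1 != p.1} ->
  alt X p = switches (map (left_of p) (funnel X p)).
Proof.
rewrite /alt; elim: (funnel X p) => [|x [|y t] IH] //= col_p.
rewrite switches_cons2 -IH => [|q qt]; last by apply: col_p; rewrite inE qt orbT.
congr addn; rewrite /left_of.
have := col_p x (mem_head _ _); have := col_p y; rewrite !inE eqxx orbT => /(_ isT).
by case: (ltngtP x.1 p.1); case: (ltngtP y.1 p.1).
Qed.

Section RestrictedFunnels.

Variables (X : seq point) (p : point).
Hypothesis p_in_X : p \in X.
Hypothesis row_inj : {in X &, forall q r, q.2 = r.2 -> q = r}.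
Hypothesis col_inj_p : {in X, forall q, q.1 = p.1 -> q = p}.

Definition top_below (P : pred point) (q : point) :=
  [/\ q \in X, P q, q.2 < p.2 & {in X, forall r, P r -> r.2 < p.2 -> r.2 <= q.2}].

Lemma alt_filterE (P : pred point) :
  alt (filter P X) p = switches (map (left_of p) (funnel (filter P X) p)).
Proof.
apply: alt_switches => q /mem_funnel [+ qp _]; rewrite mem_filter => /andP [_ qX].
apply/eqP => /(col_inj_p qX) eq_qp.
by rewrite eq_qp ltnn in qp.
Qed.

Lemma funnel_filter_sub (P Q : pred point) :
  rect_closed X p P -> rect_closed X p Q -> {in X, forall q, Q q -> P q} ->
  funnel (filter Q X) p = filter Q (funnel (filter P X) p).
Proof.
move=> clP clQ QP; rewrite !funnel_filter // -filter_predI.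
apply: eq_in_filter => q /mem_funnel [qX _ _] /=.
by case Qq: (Q q); rewrite // QP.
Qed.

Lemma alt_filter_mono (P Q : pred point) :
  rect_closed X p P -> rect_closed X p Q -> {in X, forall q, Q q -> P q} ->
  alt (filter Q X) p <= alt (filter P X) p.
Proof.
move=> clP clQ QP; rewrite !alt_filterE (funnel_filter_sub clP clQ QP).
exact/switches_subseq/map_subseq/filter_subseq.
Qed.

Lemma top_below_in_funnel (P : pred point) q :
  top_below P q -> q \in funnel (filter P X) p.
Proof.
case=> qX Pq qp top; rewrite funnelE mem_sort !mem_filter Pq qX qp /= andbT.
apply/allP => r; rewrite mem_filter => /andP [Pr rX].
case: (boolP (in_rect p q r)) => [|_]; last by rewrite !orbT.
rewrite /in_rect => /andP [_ /andP []].
rewrite (minn_idPr (ltnW qp)) (maxn_idPl (ltnW qp)) => qr rp.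
case: (ltnP r.2 p.2) => [rp' | pr].
  by rewrite (row_inj rX qX) ?eqxx ?orbT //; apply/eqP; rewrite eqn_leq qr top.
by rewrite (row_inj rX p_in_X) ?eqxx //; apply/eqP; rewrite eqn_leq rp pr.
Qed.

Lemma funnel_rcons_top (P : pred point) q :
  top_below P q -> exists f, funnel (filter P X) p = rcons f q.
Proof.
move=> topq; have qin := top_below_in_funnel topq.
have sorted_F := sorted_funnel (filter P X) p.
have mem_F := @mem_funnel (filter P X) p.
move: qin sorted_F mem_F; case/lastP: (funnel _ p) => [|f l] // qin sorted_F mem_F.
exists f; congr rcons.
have l_in : l \in rcons f l by rewrite mem_rcons mem_head.
have [+ lp _] := mem_F l l_in.
rewrite mem_filter => /andP [Pl lX].
case: topq => qX _ _ top; apply: row_inj => //; apply/eqP; rewrite eqn_leq top //=.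
move: sorted_F; rewrite sorted_pairwise; last exact: row_le_trans.
rewrite pairwise_rcons => /andP [/allP ql _].
by move: qin; rewrite mem_rcons inE => /orP [/eqP -> | /ql].
Qed.

Lemma alt_filter_gain (P Q : pred point) q1 q2 :
  rect_closed X p P -> rect_closed X p Q -> {in X, forall q, Q q -> P q} ->
  top_below P q1 -> ~~ Q q1 -> top_below Q q2 ->
  alt (filter Q X) p + (left_of p q2 != left_of p q1) <= alt (filter P X) p.
Proof.
move=> clP clQ QP top1 nQq1 top2.
have [F eF] := funnel_rcons_top top1.
have [G eG] := funnel_rcons_top top2.
have sub : subseq (rcons (rcons G q2) q1) (rcons F q1).
  rewrite -eG (funnel_filter_sub clP clQ QP) eF filter_rcons (negbTE nQq1) -!cats1.
  by apply: cat_subseq; [exact: filter_subseq | exact: subseq_refl].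
rewrite !alt_filterE eG eF !map_rcons -switches_rcons2 -!map_rcons.
exact/switches_subseq/map_subseq.
Qed.

End RestrictedFunnels.

(* [bitrev i a] reverses the i bits of a: it is the row, counted from 0, of the
   point in column a (counted from 0) of BRS(2^i), see [BRS_recE]. *)
Fixpoint bitrev (i a : nat) : nat :=
  match i with
  | 0 => 0
  | i'.+1 => if a < 2 ^ i' then (bitrev i' a).*2 else (bitrev i' (a - 2 ^ i')).*2.+1
  end.

Lemma bitrevS_lo k a : a < 2 ^ k -> bitrev k.+1 a = (bitrev k a).*2.
Proof. by move=> /= ->. Qed.

Lemma bitrevS_hi k a : 2 ^ k <= a -> bitrev k.+1 a = (bitrev k (a - 2 ^ k)).*2.+1.
Proof. by rewrite /= ltnNge => ->. Qed.

Lemma bitrev_lt i a : bitrev i a < 2 ^ i.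
Proof.
elim: i a => [|i IH] a //=; rewrite expnS mul2n.
by case: ifP => _; [rewrite ltn_double | rewrite ltn_Sdouble].
Qed.

Lemma bitrev_inj i a b : a < 2 ^ i -> b < 2 ^ i -> bitrev i a = bitrev i b -> a = b.
Proof.
elim: i a b => [|i IH] a b; first by rewrite !ltnS !leqn0 => /eqP -> /eqP ->.
rewrite expnS mul2n -addnn /= => ha hb.
case: ifP => a_lo; case: ifP => b_lo.
- by move/double_inj; apply: IH.
- by move/(congr1 odd); rewrite /= !odd_double.
- by move/(congr1 odd); rewrite /= !odd_double.
- move/succn_inj/double_inj/IH; lia.
Qed.

Lemma bitrev_cat m k t v : t < 2 ^ m -> v < 2 ^ k ->
  bitrev (m + k) (t * 2 ^ k + v) = bitrev m t + 2 ^ m * bitrev k v.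
Proof.
elim: m t => [|m IH] t; first by rewrite ltnS leqn0 => /eqP -> /=; rewrite mul1n.
rewrite addSn expnS => ht hv /=; rewrite expnD.
have [t_lo | t_hi] := ltnP t (2 ^ m).
  rewrite ifT; last by nia.
  by rewrite IH // doubleD -!mul2n mulnA.
rewrite ifF; last by apply/negbTE; rewrite -leqNgt; nia.
have le_mt : 2 ^ m * 2 ^ k <= t * 2 ^ k by rewrite leq_mul2r t_hi orbT.
have -> : t * 2 ^ k + v - 2 ^ m * 2 ^ k = (t - 2 ^ m) * 2 ^ k + v by rewrite mulnBl; lia.
rewrite IH //; last by lia.
by rewrite doubleD -!mul2n mulnA addSn.
Qed.

Lemma bitrev_block_ltn i k t v w :
  k <= i -> t < 2 ^ (i - k) -> v < 2 ^ k -> w < 2 ^ k ->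
  (bitrev i (t * 2 ^ k + v) < bitrev i (t * 2 ^ k + w)) = (bitrev k v < bitrev k w).
Proof.
move=> ki ht hv hw.
by rewrite -(subnK ki) !bitrev_cat // ltn_add2l ltn_pmul2l // expn_gt0.
Qed.

Lemma bitrev_block_leq i k t v w :
  k <= i -> t < 2 ^ (i - k) -> v < 2 ^ k -> w < 2 ^ k ->
  (bitrev i (t * 2 ^ k + v) <= bitrev i (t * 2 ^ k + w)) = (bitrev k v <= bitrev k w).
Proof.
move=> ki ht hv hw.
by rewrite -(subnK ki) !bitrev_cat // leq_add2l leq_pmul2l // expn_gt0.
Qed.

Lemma bitrev_second_quarter k u : 2 ^ k <= u < 2 ^ k.+1 ->
  (bitrev k.+2 (2 ^ k.+1 + (u - 2 ^ k))).+1 = bitrev k.+2 u /\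
  (bitrev k.+1 (u - 2 ^ k)).+1 = bitrev k.+1 u.
Proof.
move=> /andP [u_lo u_hi]; have x_lt : u - 2 ^ k < 2 ^ k by rewrite expnS in u_hi; lia.
rewrite bitrevS_hi ?leq_addr // addKn (bitrevS_lo x_lt) (bitrevS_lo u_hi) (bitrevS_hi u_lo).
by rewrite -doubleS.
Qed.

Lemma odd_even_pos_cons (x : nat) t :
  odd_pos (x :: t) = x :: even_pos t /\ even_pos (x :: t) = odd_pos t.
Proof. by elim: t x => [|y t IH] x //=; case: (IH y) => <- <-. Qed.

Lemma nth_odd_even_pos (R : seq nat) k :
  nth 0 (odd_pos R) k = nth 0 R k.*2 /\ nth 0 (even_pos R) k = nth 0 R k.*2.+1.
Proof.
elim: R k => [|x R IH] k; first by rewrite !nth_nil.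
have [-> ->] := odd_even_pos_cons x R.
by case: k => [|k] /=; [case: (IH 0) | case: (IH k); case: (IH k.+1)].
Qed.

Lemma size_odd_even_pos (R : seq nat) :
  size (odd_pos R) = uphalf (size R) /\ size (even_pos R) = (size R)./2.
Proof.
elim: R => [|x R [IHo IHe]] //.
by have [-> ->] := odd_even_pos_cons x R; rewrite /= IHo IHe.
Qed.

Lemma BRS_recE i R C : size R = 2 ^ i -> size C = 2 ^ i ->
  BRS_rec i R C = [seq (nth 0 C a, nth 0 R (bitrev i a)) | a <- iota 0 (2 ^ i)].
Proof.
elim: i R C => [|i IH] R C sR sC; first by rewrite /= !nth0.
have [sRo sRe] := size_odd_even_pos R.
rewrite sR expnS mul2n in sRo sRe sC.
rewrite uphalf_double in sRo; rewrite doubleK in sRe.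
have sCl : size (take (2 ^ i) C) = 2 ^ i by rewrite size_takel // sC -addnn leq_addr.
have sCr : size (drop (2 ^ i) C) = 2 ^ i by rewrite size_drop sC -addnn addnK.
rewrite /= !IH // expnS mul2n -addnn iotaD map_cat.
congr cat.
  apply/eq_in_map => a; rewrite mem_iota => /andP [_ ha] /=.
  by rewrite nth_take // ha (proj1 (nth_odd_even_pos R _)).
have -> : iota (0 + 2 ^ i) (2 ^ i) = map (addn (2 ^ i)) (iota 0 (2 ^ i)).
  by rewrite -iotaDl addn0.
rewrite -map_comp.
apply/eq_in_map => a; rewrite mem_iota => /andP [_ ha] /=.
rewrite nth_drop ifN -?leqNgt ?leq_addr // addKn.
by rewrite (proj2 (nth_odd_even_pos R _)).
Qed.

Definition shift_col (n s c : nat) : nat := ((c + s) %% n).+1.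

Definition brs_point (i s a : nat) : point := (shift_col (2 ^ i) s a, (bitrev i a).+1).

Lemma cyc_shift_BRS i s :
  cyc_shift (2 ^ i) s (BRS i) = map (brs_point i s) (iota 0 (2 ^ i)).
Proof.
rewrite /cyc_shift /BRS BRS_recE ?size_iota // -map_comp.
apply/eq_in_map => a; rewrite mem_iota => /andP [_ ha] /=.
by rewrite !nth_iota ?bitrev_lt // /brs_point /shift_col add1n subn1 addn1.
Qed.

Definition no_wrap (n s lo L : nat) : bool := (lo + L <= n - s) || (n - s <= lo).

Lemma rect_closed_cols X p lo hi : lo <= p.1 <= hi ->
  rect_closed X p (fun q => lo <= q.1 <= hi).
Proof.
rewrite /in_rect => /andP [p_lo p_hi] q r _ _ /andP [q_lo q_hi] /andP [/andP [r_lo r_hi] _].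
apply/andP; split; lia.
Qed.

Section CyclicShift.

Variables n s : nat.
Hypothesis s_lt_n : s < n.

Lemma shift_col_cases c : c < n ->
  (c + s < n /\ shift_col n s c = (c + s).+1) \/ (n <= c + s /\ shift_col n s c = (c + s - n).+1).
Proof.
move=> c_lt; rewrite /shift_col; case: (ltnP (c + s) n) => h; first by left; rewrite modn_small.
by right; rewrite -(subnK h) modnDr modn_small ?addnK //; lia.
Qed.

Lemma shift_col_inj c d : c < n -> d < n -> shift_col n s c = shift_col n s d -> c = d.
Proof.
move=> c_lt d_lt; case: (shift_col_cases c_lt) => [[? ->]|[? ->]];
by case: (shift_col_cases d_lt) => [[? ->]|[? ->]]; lia.
Qed.

Lemma shift_col_interval lo L c : 0 < L -> lo + L <= n -> no_wrap n s lo L -> c < n ->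
  (shift_col n s lo <= shift_col n s c <= shift_col n s (lo + L.-1)) = (lo <= c < lo + L).
Proof.
move=> L_gt0 fits nw c_lt; rewrite /no_wrap in nw.
have lo_lt : lo < n by lia.
have hi_lt : lo + L.-1 < n by lia.
case: (shift_col_cases lo_lt) => [[? ->]|[? ->]];
case: (shift_col_cases hi_lt) => [[? ->]|[? ->]];
case: (shift_col_cases c_lt) => [[? ->]|[? ->]];
apply/idP/idP => /andP [? ?]; apply/andP; split; lia.
Qed.

Lemma shift_col_ltn lo L c d : lo + L <= n -> no_wrap n s lo L ->
  lo <= c < lo + L -> lo <= d < lo + L ->
  (shift_col n s c < shift_col n s d) = (c < d).
Proof.
move=> fits nw /andP [c_lo c_hi] /andP [d_lo d_hi]; rewrite /no_wrap in nw.
have c_lt : c < n by lia.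
have d_lt : d < n by lia.
case: (shift_col_cases c_lt) => [[? ->]|[? ->]];
case: (shift_col_cases d_lt) => [[? ->]|[? ->]]; apply/idP/idP; lia.
Qed.

End CyclicShift.

Lemma sum_nat_blocks (F : nat -> nat) m L :
  \sum_(0 <= a < m * L) F a = \sum_(0 <= t < m) \sum_(0 <= u < L) F (t * L + u).
Proof.
elim: m => [|m IH]; first by rewrite mul0n !big_geq.
rewrite big_nat_recr //= -IH mulSn addnC (@big_cat_nat _ _ _ (m * L)) ?leq_addr //=.
congr addn; rewrite -{1}[m * L]add0n big_addn addKn.
by apply: eq_bigr => u _; rewrite addnC.
Qed.

Lemma sum_nat_interval lo hi L :
  \sum_(0 <= u < L) (lo <= u < hi) = minn L hi - minn L lo.
Proof.
elim: L => [|L IH]; first by rewrite big_geq //; lia.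
by rewrite big_nat_recr //= IH; case: (ltnP L lo); case: (ltnP L hi); lia.
Qed.

Lemma wrapping_blocks_le1 n s m L : 0 < L -> \sum_(0 <= t < m) ~~ no_wrap n s (t * L) L <= 1.
Proof.
move=> L_gt0; elim: m => [|m IH]; first by rewrite big_geq.
rewrite big_nat_recr //=; case nw: (no_wrap n s (m * L) L); first by rewrite addn0.
rewrite big_nat_cond big1 // => t /andP [/andP [_ t_lt] _].
move/negbT: nw; rewrite /no_wrap negb_or -!ltnNge => /andP [_ lt_mL].
suff : t * L + L <= n - s by move=> ->.
by apply: leq_trans (ltnW lt_mL); rewrite addnC -mulSn leq_mul2r t_lt orbT.
Qed.

Lemma sum_pow2_lt m : \sum_(0 <= k < m) 2 ^ k < 2 ^ m.
Proof.
elim: m => [|m IH]; first by rewrite big_geq.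
by rewrite big_nat_recr //= expnS mul2n -addnn ltn_add2r.
Qed.

Section Levels.

Variables i s : nat.
Hypothesis s_lt : s < 2 ^ i.

Local Notation n := (2 ^ i).
Local Notation pt := (brs_point i s).
Local Notation X := (map pt (iota 0 n)).

Lemma mem_X q : q \in X -> exists2 c, c < n & q = pt c.
Proof. by case/mapP => c; rewrite mem_iota => /andP [_ c_lt] ->; exists c. Qed.

Lemma pt_in_X c : c < n -> pt c \in X.
Proof. by move=> c_lt; apply: map_f; rewrite mem_iota. Qed.

Lemma X_row_inj : {in X &, forall q r, q.2 = r.2 -> q = r}.
Proof. by move=> _ _ /mem_X [c c_lt ->] /mem_X [d d_lt ->] [/(bitrev_inj c_lt d_lt) ->]. Qed.

Lemma X_col_inj a : a < n -> {in X, forall q, q.1 = (pt a).1 -> q = pt a}.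
Proof. by move=> a_lt _ /mem_X [c c_lt ->] /(shift_col_inj s_lt c_lt a_lt) ->. Qed.

Definition block k a := a %/ 2 ^ k * 2 ^ k.

(* The image of the block under the shift is this column interval only when the
   block does not wrap around, i.e. under [block_no_wrap k a]. *)
Definition in_block k a : pred point := fun q =>
  shift_col n s (block k a) <= q.1 <= shift_col n s (block k a + (2 ^ k).-1).

Definition block_no_wrap k a := no_wrap n s (block k a) (2 ^ k).

Definition block_alt k a := alt (filter (in_block k a) X) (pt a).

Lemma blockE k a : block k a = a - a %% 2 ^ k.
Proof. by rewrite {2}(divn_eq a (2 ^ k)) addnK. Qed.

Lemma block_bounds k a : block k a <= a < block k a + 2 ^ k.
Proof. by rewrite blockE leq_subr -ltn_subLR ?leq_subr // subKn ?leq_mod // ltn_mod expn_gt0. Qed.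

Lemma block_fits k a : k <= i -> a < n -> block k a + 2 ^ k <= n.
Proof.
move=> ki a_lt; have e : n = 2 ^ (i - k) * 2 ^ k by rewrite -expnD subnK.
by rewrite /block e addnC -mulSn leq_mul2r ltn_divLR ?expn_gt0 // -e a_lt orbT.
Qed.

Lemma block_nested k a :
  block k.+1 a <= block k a /\ block k a + 2 ^ k <= block k.+1 a + 2 ^ k.+1.
Proof.
rewrite /block expnSr divnMA.
have := divn_eq (a %/ 2 ^ k) 2; have := ltn_pmod (a %/ 2 ^ k) (isT : 0 < 2).
move: (a %/ 2 ^ k) (2 ^ k) => q P h1 h2; split; nia.
Qed.

Lemma modn_exp2_small k m a : k <= m -> a %% 2 ^ m < 2 ^ k -> a %% 2 ^ k = a %% 2 ^ m.
Proof. by move=> km small; rewrite -(modn_small small) modn_dvdm // dvdn_exp2l. Qed.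

Lemma block_no_wrapS k a : block_no_wrap k.+1 a -> block_no_wrap k a.
Proof.
rewrite /block_no_wrap /no_wrap; have [h1 h2] := block_nested k a.
by case/orP => h; apply/orP; [left | right]; lia.
Qed.

Lemma in_block_pt k a c : k <= i -> a < n -> block_no_wrap k a -> c < n ->
  in_block k a (pt c) = (block k a <= c < block k a + 2 ^ k).
Proof. by move=> ki a_lt nw c_lt; apply: shift_col_interval; rewrite ?expn_gt0 ?block_fits. Qed.

Lemma block_rect_closed k a : k <= i -> a < n -> block_no_wrap k a ->
  rect_closed X (pt a) (in_block k a).
Proof.
move=> ki a_lt nw; apply: rect_closed_cols.
by rewrite -/(in_block k a (pt a)) in_block_pt ?block_bounds.
Qed.

Lemma left_of_block k a c d : k <= i -> a < n -> block_no_wrap k a ->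
  block k a <= c < block k a + 2 ^ k -> block k a <= d < block k a + 2 ^ k ->
  left_of (pt d) (pt c) = (c < d).
Proof. by move=> ki a_lt nw; apply: shift_col_ltn => //; apply: block_fits. Qed.

Lemma block_row_ltn k a v w : k <= i -> a < n -> v < 2 ^ k -> w < 2 ^ k ->
  ((pt (block k a + v)).2 < (pt (block k a + w)).2) = (bitrev k v < bitrev k w).
Proof.
move=> ki a_lt v_lt w_lt; rewrite /= ltnS bitrev_block_ltn //.
by rewrite ltn_divLR ?expn_gt0 // -expnD subnK.
Qed.

Lemma block_row_leq k a v w : k <= i -> a < n -> v < 2 ^ k -> w < 2 ^ k ->
  ((pt (block k a + v)).2 <= (pt (block k a + w)).2) = (bitrev k v <= bitrev k w).
Proof.
move=> ki a_lt v_lt w_lt; rewrite /= ltnS bitrev_block_leq //.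
by rewrite ltn_divLR ?expn_gt0 // -expnD subnK.
Qed.

Lemma in_block_sub k a : k.+1 <= i -> a < n -> block_no_wrap k.+1 a ->
  {in X, forall q, in_block k a q -> in_block k.+1 a q}.
Proof.
move=> ki a_lt nw _ /mem_X [c c_lt ->]; have [h1 h2] := block_nested k a.
by rewrite !in_block_pt ?(block_no_wrapS nw) //; [lia | exact: ltnW].
Qed.

Lemma block_alt_le_alt k a : k <= i -> a < n -> block_no_wrap k a ->
  block_alt k a <= alt X (pt a).
Proof.
move=> ki a_lt nw.
have := alt_filter_mono (X_col_inj a_lt) (P := predT) (Q := in_block k a).
by rewrite filter_predT; apply=> //; apply: block_rect_closed.
Qed.

Lemma block_alt_mono k a : k.+1 <= i -> a < n -> block_no_wrap k.+1 a ->
  block_alt k a <= block_alt k.+1 a.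
Proof.
move=> ki a_lt nw; rewrite /block_alt.
exact: (alt_filter_mono (X_col_inj a_lt) (block_rect_closed ki a_lt nw)
  (block_rect_closed (ltnW ki) a_lt (block_no_wrapS nw)) (in_block_sub ki a_lt nw)).
Qed.

Lemma block_top_below k a v : k <= i -> a < n -> block_no_wrap k a -> v < 2 ^ k ->
  (bitrev k v).+1 = bitrev k (a %% 2 ^ k) ->
  top_below X (pt a) (in_block k a) (pt (block k a + v)).
Proof.
move=> ki a_lt nw v_lt rev_v.
have u_lt : a %% 2 ^ k < 2 ^ k by rewrite ltn_mod expn_gt0.
have ea : pt a = pt (block k a + a %% 2 ^ k) by rewrite /block -divn_eq.
have fits := block_fits ki a_lt.
split.
- by apply: pt_in_X; lia.
- by rewrite in_block_pt ?leq_addr ?ltn_add2l //; lia.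
- by rewrite ea block_row_ltn // -rev_v.
- move=> _ /mem_X [c c_lt ->]; rewrite in_block_pt // => /andP [c_lo c_hi].
  have w_lt : c - block k a < 2 ^ k by rewrite ltn_subLR.
  by rewrite ea -(subnKC c_lo) block_row_ltn // block_row_leq // -rev_v ltnS.
Qed.

Lemma block_alt_gain k a : k.+2 <= i -> a < n -> block_no_wrap k.+2 a ->
  2 ^ k <= a %% 2 ^ k.+2 < 2 ^ k.+1 -> (block_alt k.+1 a).+1 <= block_alt k.+2 a.
Proof.
move=> ki a_lt nw2 quarter; have nw1 := block_no_wrapS nw2.
have /andP [u_lo u_hi] := quarter.
have eu : a %% 2 ^ k.+1 = a %% 2 ^ k.+2 by apply: modn_exp2_small.
have eb : block k.+1 a = block k.+2 a by rewrite !blockE eu.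
have ea : a = block k.+2 a + a %% 2 ^ k.+2 by rewrite blockE subnK ?leq_mod.
have [rev1 rev2] := bitrev_second_quarter quarter.
have fits := block_fits ki a_lt.
have a_in := block_bounds k.+2 a.
have pos : 0 < 2 ^ k by rewrite expn_gt0.
have e1 : 2 ^ k.+1 = 2 * 2 ^ k by rewrite expnS.
have e2 : 2 ^ k.+2 = 4 * 2 ^ k by rewrite !expnS mulnA.
set b := block k.+2 a in eb ea fits a_in *; set u := a %% 2 ^ k.+2 in eu ea u_lo u_hi rev1 rev2 *.
set x := u - 2 ^ k in rev1 rev2 *; have x_lt : x < 2 ^ k by rewrite /x; lia.
have top1 : top_below X (pt a) (in_block k.+2 a) (pt (b + (2 ^ k.+1 + x))).
  by apply: block_top_below => //; lia.
have top2 : top_below X (pt a) (in_block k.+1 a) (pt (b + x)).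
  by rewrite -eb; apply: block_top_below; rewrite ?eu //; lia.
have c1_out : ~~ in_block k.+1 a (pt (b + (2 ^ k.+1 + x))).
  by rewrite in_block_pt ?eb //; lia.
have := alt_filter_gain (pt_in_X a_lt) X_row_inj (X_col_inj a_lt)
  (block_rect_closed ki a_lt nw2) (block_rect_closed (ltnW ki) a_lt nw1)
  (in_block_sub ki a_lt nw2) top1 c1_out top2.
have c1_in : b <= b + (2 ^ k.+1 + x) < b + 2 ^ k.+2 by apply/andP; split; lia.
have c2_in : b <= b + x < b + 2 ^ k.+2 by apply/andP; split; lia.
rewrite (left_of_block ki a_lt nw2 c1_in a_in) (left_of_block ki a_lt nw2 c2_in a_in).
have -> : b + x < a by lia.
have -> : b + (2 ^ k.+1 + x) < a = false by apply/negbTE; lia.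
by rewrite addn1.
Qed.

Definition level_gain k a : bool :=
  block_no_wrap k.+2 a && (2 ^ k <= a %% 2 ^ k.+2 < 2 ^ k.+1).

Lemma level_gains_le_block_alt m a : m < i -> a < n -> block_no_wrap m.+1 a ->
  \sum_(0 <= k < m) level_gain k a <= block_alt m.+1 a.
Proof.
elim: m => [|m IH] mi a_lt nw; first by rewrite big_geq.
have step : block_alt m.+1 a + level_gain m a <= block_alt m.+2 a.
  rewrite /level_gain nw /=.
  case: (boolP (2 ^ m <= a %% 2 ^ m.+2 < 2 ^ m.+1)) => [quarter | _].
    by rewrite addn1 block_alt_gain.
  by rewrite addn0 block_alt_mono.
rewrite big_nat_recr //=; apply: leq_trans step.
by rewrite leq_add2r IH ?(block_no_wrapS nw) // ltnW.
Qed.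

Lemma level_gains_le_alt m a : m < i -> a < n ->
  \sum_(0 <= k < m) level_gain k a <= alt X (pt a).
Proof.
elim: m => [|m IH] mi a_lt; first by rewrite big_geq.
case nw: (block_no_wrap m.+2 a).
  exact: leq_trans (level_gains_le_block_alt mi a_lt nw) (block_alt_le_alt mi a_lt nw).
by rewrite big_nat_recr //= /level_gain nw addn0 IH // ltnW.
Qed.

Lemma level_block_gains k t :
  \sum_(0 <= u < 2 ^ k.+2) level_gain k (t * 2 ^ k.+2 + u) =
  no_wrap n s (t * 2 ^ k.+2) (2 ^ k.+2) * 2 ^ k.
Proof.
set nw := no_wrap n s (t * 2 ^ k.+2) (2 ^ k.+2).
rewrite (eq_big_nat _ _ (F2 := fun u => nw * (2 ^ k <= u < 2 ^ k.+1))); last first.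
  move=> u /andP [_ u_lt]; have L_gt0 : 0 < 2 ^ k.+2 by rewrite expn_gt0.
  rewrite /level_gain /block_no_wrap /block divnMDl // divn_small // addn0.
  by rewrite modnMDl modn_small // -/nw; case: nw; rewrite ?mul1n ?mul0n.
by rewrite -big_distrr /= sum_nat_interval !expnS; congr muln; lia.
Qed.

Lemma level_gains_count k : k.+2 <= i ->
  2 ^ (i - 2) <= \sum_(0 <= a < n) level_gain k a + 2 ^ k.
Proof.
move=> ki; set m := 2 ^ (i - k.+2).
have en : n = m * 2 ^ k.+2 by rewrite -expnD subnK.
have em : 2 ^ (i - 2) = m * 2 ^ k by rewrite -expnD; congr expn; lia.
rewrite en sum_nat_blocks (eq_big_nat _ _ (fun t _ => level_block_gains k t)) -big_distrl /= em.
have wrap := wrapping_blocks_le1 n s m (expn_gt0 2 k.+2).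
have split_m : \sum_(0 <= t < m) no_wrap n s (t * 2 ^ k.+2) (2 ^ k.+2) +
               \sum_(0 <= t < m) ~~ no_wrap n s (t * 2 ^ k.+2) (2 ^ k.+2) = m.
  rewrite -big_split /= (eq_big_nat _ _ (F2 := fun _ => 1)) ?sum_nat_const_nat ?muln1 ?subn0 //.
  by move=> t _; case: (no_wrap _ _ _ _).
nia.
Qed.

Lemma WB2_shifted_BRS_ge : i * n <= 4 * WB2 X.
Proof.
rewrite /WB2 size_map size_iota big_map.
have -> : \sum_(a <- iota 0 n) alt X (pt a) = \sum_(0 <= a < n) alt X (pt a).
  by rewrite /index_iota subn0.
have [i_le1 | i_ge2] := leqP i 1.
  by rewrite mulnDr -[i * n]addn0 leq_add // leq_mul2r (leq_trans i_le1) ?orbT.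
have alts : \sum_(0 <= k < i.-1) \sum_(0 <= a < n) level_gain k a <=
            \sum_(0 <= a < n) alt X (pt a).
  rewrite exchange_big_nat big_nat_cond [X in _ <= X]big_nat_cond.
  by apply: leq_sum => a /andP [/andP [_ a_lt] _]; apply: level_gains_le_alt; lia.
have counts : \sum_(0 <= k < i.-1) 2 ^ (i - 2) <=
              \sum_(0 <= k < i.-1) (\sum_(0 <= a < n) level_gain k a + 2 ^ k).
  rewrite big_nat_cond [X in _ <= X]big_nat_cond.
  by apply: leq_sum => k /andP [/andP [_ k_lt] _]; apply: level_gains_count; lia.
rewrite big_split sum_nat_const_nat subn0 /= in counts.
have geom := sum_pow2_lt i.-1.
have en : n = 4 * 2 ^ (i - 2) by rewrite -[4]/(2 ^ 2) -expnD subnKC.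
have ei : 2 ^ i.-1 = 2 * 2 ^ (i - 2) by rewrite -expnS; congr expn; lia.
nia.
Qed.

End Levels.

Lemma ln_pow2 i : ln (INR (2 ^ i)) = Rmult (INR i) (ln (INR 2)).
Proof.
elim: i => [|i IH]; first by rewrite expn0 /= ln_1 Rmult_0_l.
have two_gt0 : Rlt 0 (INR 2) by apply/lt_0_INR/ltP.
have pow_gt0 : Rlt 0 (INR (2 ^ i)) by apply/lt_0_INR/ltP; rewrite expn_gt0.
by rewrite expnS -multE mult_INR ln_mult // IH (S_INR i); ring.
Qed.

Lemma ln2_le1 : Rle (ln (INR 2)) 1.
Proof.
change (INR 2) with (Rplus 1 1); rewrite -[X in Rle _ X](ln_exp 1).
by left; apply: ln_increasing; [lra | have := exp_ineq1 1; lra].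
Qed.

Theorem lemma4p18 :
  exists c : R, Rlt 0 c /\
    forall (i s : nat), s < 2 ^ i ->
      Rle (Rmult c (Rmult (INR (2 ^ i)) (ln (INR (2 ^ i)))))
          (INR (WB2 (cyc_shift (2 ^ i) s (BRS i)))).
Proof.
exists (Rinv 4); split; first lra.
move=> i s s_lt; rewrite cyc_shift_BRS ln_pow2.
have /leP/le_INR := WB2_shifted_BRS_ge s_lt; rewrite -!multE !mult_INR [INR 4]/=.
have := ln2_le1.
have : Rle 0 (Rmult (INR i) (INR (2 ^ i))) by apply: Rmult_le_pos; apply: pos_INR.
nra.
Qed.
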